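(* Let $e\geq 2$, $N$ cyclic of order $2^e$, and let $G$ be a non-regular transitive subgroup of $\mathrm{Hol}(N)$. Then $|Z(G)|\cdot|[G,G]|=2^e$.
   Context: $\mathrm{Hol}(N)=N\rtimes\mathrm{Aut}(N)$ acts on $N$ by $(\eta,\alpha)\cdot x=\eta\,\alpha(x)$; a subgroup is transitive if it acts transitively on $N$, and regular if moreover the stabiliser of $1_N$ is trivial. $Z(G)$ is the centre and $[G,G]$ the commutator subgroup of $G$. *)

From mathcomp Require Import all_boot all_order all_fingroup all_solvable.
Set Implicit Arguments. Unset Strict Implicit. Unset Printing Implicit Defensive.
Local Open Scope group_scope.

(* The group N is the whole finite group type gT (N := [set: gT]).
   Hol(N) = N ⋊ Aut(N) is realised through its (faithful) action on N:
   the permutation x |-> eta * alpha x of N, for eta in N, alpha in Aut(N). *)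
Definition holomorph (gT : finGroupType) : {set {perm gT}} :=
  [set p : {perm gT} | [exists eta : gT,
     [exists alpha in Aut [set: gT], [forall x : gT, p x == eta * alpha x]]]].

Definition hol_transitive (gT : finGroupType) (G : {set {perm gT}}) : bool :=
  [transitive G, on [set: gT] | 'P].

Definition hol_regular (gT : finGroupType) (G : {set {perm gT}}) : bool :=
  hol_transitive G && ('C_G[1 | 'P] == 1).

From mathcomp Require Import all_boot all_order all_fingroup all_solvable.
From mathcomp Require Import all_algebra ring zify.
Set Implicit Arguments. Unset Strict Implicit. Unset Printing Implicit Defensive.
Import GRing.Theory.
Local Open Scope group_scope.

(* Identify N = <z> with Z/2^e through x |-> z^x.  Every element p of Hol(N) acts
   as an affine map z^x |-> z^(b + a x) with a a unit, and is determined by its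
   shift b and slope a.  Transitivity yields h in G of shift 1, and the commutator
   [p, q] is the translation by f(p) b(q) - f(q) b(p), where f(p) is the shift of
   [p, h].  Let 2^l be the largest power of 2 dividing every f(p): a non-trivial
   point stabiliser has f <> 0, so l < e, and all slopes are odd, so l > 0.  Hence
   [G, G] is the group of translations by multiples of 2^l, of order 2^(e-l).  A
   central element commutes with h, so its slope is determined by its shift, and
   commuting with an element where f has valuation l forces 2^(e-l) to divide its
   shift: |Z(G)| <= 2^l.  Conversely, non-regularity makes C_G(h) larger than 2^l,
   so it contains an element whose shift has valuation between 1 and e - l, and a
   suitable 2-power of it is central of order 2^l. *)

Lemma order_pfactor (gT : finGroupType) (x : gT) p k : prime p -> (0 < k)%N ->
  x ^+ (p ^ k) = 1 -> x ^+ (p ^ k.-1) != 1 -> #[x] = (p ^ k)%N.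
Proof.
move=> p_pr k_gt0 xpk xpk1; have /dvdn_pfactor[//|i le_ik ox] : (#[x] %| p ^ k)%N.
  by rewrite order_dvdn xpk.
rewrite ox; congr (_ ^ _)%N; apply/eqP; rewrite eqn_leq le_ik leqNgt.
apply: contra xpk1 => lt_ik; rewrite -order_dvdn ox dvdn_exp2l // -ltnS prednK //.
Qed.

Lemma card_class_le_commg (gT : finGroupType) (G : {group gT}) x :
  x \in G -> (#|x ^: G| <= #|[~: G, G]|)%N.
Proof.
move=> xG; rewrite -(card_lcoset [~: G, G] x).
apply/subset_leq_card/subsetP => _ /imsetP[g gG ->].
by rewrite conjg_mulR mem_lcoset mulKg mem_commg.
Qed.

Lemma hol_nonregular_stab (gT : finGroupType) (G : {group {perm gT}}) :
  hol_transitive G -> ~~ hol_regular G -> exists2 s, s \in G & s 1 = 1 /\ s != 1.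
Proof.
rewrite /hol_regular => -> /trivgPn[s /setIP[sG /astab1P s1] s_neq1].
by exists s.
Qed.

Lemma hol_nonregular_card (gT : finGroupType) (G : {group {perm gT}}) :
  hol_transitive G -> ~~ hol_regular G -> (#|gT| < #|G|)%N.
Proof.
move=> trG; rewrite /hol_regular trG /= => stab_nontriv.
rewrite -(card_orbit_in_stab 'P 1 (subsetT G)) (atransP trG) ?inE // cardsT.
by rewrite -{1}(muln1 #|gT|) ltn_mul2l cardG_gt1 stab_nontriv -cardsT cardG_gt0.
Qed.

Section Pow2Ring.
Variable e : nat.
Hypothesis e_gt0 : (0 < e)%N.
Local Notation R := 'Z_(2 ^ e).
Local Open Scope ring_scope.

Lemma exp2_gt1 : (1 < 2 ^ e)%N.
Proof. by rewrite -{1}(expn0 2) ltn_exp2l. Qed.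

Lemma exp2e_eq0 : (2%:R : R) ^+ e = 0.
Proof. by rewrite -natrX; apply: val_inj; rewrite /= val_Zp_nat ?exp2_gt1 ?modnn. Qed.

Lemma mul_exp2_unit_eq0 s (u : R) :
  u \is a GRing.unit -> (2%:R ^+ s * u == 0) = (e <= s)%N.
Proof.
move=> u_unit; apply/eqP/idP => [xu0 | le_e_s]; last first.
  by rewrite -(subnK le_e_s) exprD exp2e_eq0 mulr0 mul0r.
have /(congr1 val) : 2%:R ^+ s = 0 :> R by rewrite -(mulrK u_unit (_ ^+ s)) xu0 mul0r.
rewrite -natrX /= val_Zp_nat ?exp2_gt1 // => /eqP.
by rewrite -/(dvdn _ _) dvdn_Pexp2l.
Qed.

Definition dvd2 k (x : R) := [exists y, x == 2%:R ^+ k * y].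

Lemma dvd2P k x : reflect (exists y, x = 2%:R ^+ k * y) (dvd2 k x).
Proof. by apply: (iffP existsP) => -[y /eqP xE]; exists y. Qed.

Lemma dvd2_exp2 k y : dvd2 k (2%:R ^+ k * y).
Proof. by apply/dvd2P; exists y. Qed.

Lemma dvd2W j k x : (j <= k)%N -> dvd2 k x -> dvd2 j x.
Proof. by move=> le_jk /dvd2P[y ->]; rewrite -(subnKC le_jk) exprD -mulrA dvd2_exp2. Qed.

Lemma dvd20 k : dvd2 k 0.
Proof. by rewrite -(mulr0 (2%:R ^+ k)) dvd2_exp2. Qed.

Lemma dvd2D k x y : dvd2 k x -> dvd2 k y -> dvd2 k (x + y).
Proof. by move=> /dvd2P[a ->] /dvd2P[b ->]; rewrite -mulrDr dvd2_exp2. Qed.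

Lemma dvd2N k x : dvd2 k x -> dvd2 k (- x).
Proof. by move=> /dvd2P[a ->]; rewrite -mulrN dvd2_exp2. Qed.

Lemma dvd2M j k x y : dvd2 j x -> dvd2 k y -> dvd2 (j + k) (x * y).
Proof.
by move=> /dvd2P[a ->] /dvd2P[b ->]; rewrite mulrACA -exprD dvd2_exp2.
Qed.

Lemma dvd2Ml k x y : dvd2 k x -> dvd2 k (y * x).
Proof. by move=> /(dvd2M (dvd2_exp2 0 y)); rewrite expr0 mul1r. Qed.

Lemma dvd2Mr k x y : dvd2 k x -> dvd2 k (x * y).
Proof. by rewrite mulrC; apply: dvd2Ml. Qed.

Lemma dvd2_1E x : dvd2 1 x = ~~ odd x.
Proof.
apply/dvd2P/idP => [[y ->] | even_x].
  rewrite -[y]natr_Zp expr1 -natrM val_Zp_nat ?exp2_gt1 //.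
  by rewrite odd_mod ?oddM // oddX; case: e e_gt0.
exists (x./2)%:R; rewrite expr1 -natrM mul2n -[x in LHS]natr_Zp.
by rewrite -[in LHS](odd_double_half x) (negPf even_x).
Qed.

Lemma unitZp2E (x : R) : (x \is a GRing.unit) = ~~ dvd2 1 x.
Proof.
rewrite -[x]natr_Zp unitZpE ?exp2_gt1 // coprime_pexpl // coprime2n natr_Zp.
by rewrite dvd2_1E negbK.
Qed.

Lemma dvd2_1_subr1 (x : R) : ~~ dvd2 1 x -> dvd2 1 (x - 1).
Proof.
rewrite dvd2_1E negbK => odd_x; apply/dvd2P; exists (x./2)%:R.
rewrite expr1 -natrM mul2n -[x in LHS]natr_Zp -[in LHS](odd_double_half x) odd_x.
by rewrite natrD addrAC subrr add0r.
Qed.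

Lemma Zp2_decomp (x : R) : x != 0 ->
  exists s u, [/\ u \is a GRing.unit, (s < e)%N & x = 2%:R ^+ s * u].
Proof.
move=> x_neq0; have x_gt0 : (0 < x)%N.
  by rewrite lt0n; apply: contra x_neq0 => /eqP x0; apply/eqP/val_inj.
have [m cop_m xE] := pfactor_coprime (isT : prime 2) x_gt0.
have m_unit : (m%:R : R) \is a GRing.unit by rewrite unitZpE ?exp2_gt1 ?coprime_pexpl.
have {}xE : x = 2%:R ^+ logn 2 x * m%:R by rewrite -natrX -natrM mulnC -xE natr_Zp.
exists (logn 2 x), m%:R; split=> //.
by move: x_neq0; rewrite ltnNge {1}xE mul_exp2_unit_eq0.
Qed.

Lemma dvd2_ann l (x : R) : (l <= e)%N -> 2%:R ^+ l * x = 0 -> dvd2 (e - l) x.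
Proof.
move=> le_l_e; have [-> _ | /Zp2_decomp[s [u [u_unit _ ->]]]] := eqVneq x 0.
  exact: dvd20.
move/eqP; rewrite mulrA -exprD mul_exp2_unit_eq0 // => le_e_ls.
by apply: (dvd2W _ (dvd2_exp2 s u)); rewrite leq_subLR.
Qed.

Lemma card_dvd2 k : (k <= e)%N -> (#|[set x : R | dvd2 k x]| <= 2 ^ (e - k))%N.
Proof.
move=> le_k_e; pose F (r : 'I_(2 ^ (e - k))) : R := 2%:R ^+ k * r%:R.
suff sub_F : [set x : R | dvd2 k x] \subset [set F r | r in 'I_(2 ^ (e - k))].
  rewrite (leq_trans (subset_leq_card sub_F)) //.
  by rewrite (leq_trans (leq_imset_card _ _)) ?card_ord.
apply/subsetP => x; rewrite inE => /dvd2P[y ->].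
have m_gt0 : (0 < 2 ^ (e - k))%N by rewrite expn_gt0.
apply/imsetP; exists (Ordinal (ltn_pmod y m_gt0)) => //.
rewrite /F /= -[y in LHS]natr_Zp {1}(divn_eq y (2 ^ (e - k))) natrD natrM natrX.
by rewrite mulrDr mulrCA -exprD subnKC // exp2e_eq0 mulr0 add0r.
Qed.

Lemma exists_min_valuation (X : {set R}) x1 : x1 \in X -> x1 != 0 ->
  exists l, [/\ (l < e)%N, {in X, forall x, dvd2 l x}
              & exists2 u, u \is a GRing.unit & 2%:R ^+ l * u \in X].
Proof.
move=> x1X x1_neq0.
pose P k := [exists u, (u \is a GRing.unit) && (2%:R ^+ k * u \in X)].
have P_val x : x \in X -> x != 0 -> exists2 s, (s < e)%N & P s /\ dvd2 s x.
  move=> xX /Zp2_decomp[s [u [u_unit lt_s_e xE]]]; exists s => //.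
  by split; [apply/existsP; exists u; rewrite u_unit -xE | rewrite xE dvd2_exp2].
have [s lt_s_e [Ps _]] := P_val x1 x1X x1_neq0.
have [l /existsP[u /andP[u_unit uX]] l_min] := ex_minnP (ex_intro P s Ps).
exists l; split; [exact: leq_ltn_trans (l_min _ Ps) lt_s_e | | by exists u].
move=> x xX; have [-> | x_neq0] := eqVneq x 0; first exact: dvd20.
by have [s' _ [Ps' dvd_x]] := P_val x xX x_neq0; exact: dvd2W (l_min _ Ps') dvd_x.
Qed.

Lemma unit_1addr2 (t : R) : 1 + 2%:R * t \is a GRing.unit.
Proof.
have /negP odd1 : ~~ dvd2 1 (1 : R) by rewrite -unitZp2E unitr1.
rewrite unitZp2E; apply/negP => /dvd2D/(_ (dvd2N (dvd2_exp2 1 t))).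
by rewrite expr1 addrK.
Qed.

Lemma sqr_1mod4 (a : R) : dvd2 2 (a - 1) -> dvd2 2 (a ^+ 2 - 1).
Proof.
move=> /dvd2P[t a1E]; have -> : a ^+ 2 - 1 = (a - 1) * (a - 1) + 2%:R * (a - 1) by ring.
by rewrite a1E; apply: dvd2D; apply: dvd2Ml; apply: dvd2_exp2.
Qed.

Lemma addr1_1mod4 (a : R) :
  dvd2 2 (a - 1) -> exists2 u, u \is a GRing.unit & 1 + a = 2%:R * u.
Proof.
move=> /dvd2P[t a1E]; exists (1 + 2%:R * t); first exact: unit_1addr2.
by rewrite -[a](subrK 1) a1E; ring.
Qed.
End Pow2Ring.

Section AffineCoordinates.
Variables (n : nat) (gT : finGroupType) (z : gT).
Hypotheses (n_gt1 : (1 < n)%N) (oz : #[z]%g = n) (genz : [set: gT] = <[z]>%g).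
Local Notation R := 'Z_n.
Local Open Scope ring_scope.

Definition expz (x : R) : gT := (z ^+ x)%g.

Lemma expz_nat m : expz m%:R = (z ^+ m)%g.
Proof. by rewrite /expz val_Zp_nat // -oz expg_mod_order. Qed.

Lemma expzD x y : expz (x + y) = (expz x * expz y)%g.
Proof. by rewrite -[x]natr_Zp -[y]natr_Zp -natrD !expz_nat expgD. Qed.

Lemma expzM x y : expz (x * y) = (expz y ^+ x)%g.
Proof. by rewrite -[x]natr_Zp -[y]natr_Zp -natrM !expz_nat natr_Zp mulnC expgM. Qed.

Lemma expz0 : expz 0 = 1%g.
Proof. exact: expg0. Qed.

Lemma expz1 : expz 1 = z.
Proof. by rewrite -[1]/(1%:R) expz_nat expg1. Qed.

Lemma expz_inj : injective expz.
Proof.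
have lt_n (x : R) : (val x < n)%N.
  by rewrite -[X in (_ < X)%N](Zp_cast n_gt1); apply: ltn_ord.
move=> x y /eqP; rewrite /expz eq_expg_mod_order oz !modn_small ?lt_n //.
by move/eqP/val_inj.
Qed.

Definition logz (g : gT) : R := odflt 0 [pick x | expz x == g].

Lemma logzK : cancel logz expz.
Proof.
move=> g; have /cyclePmin[m _ ->] : g \in <[z]>%g by rewrite -genz inE.
rewrite /logz; case: pickP => [x /eqP // | /(_ m%:R)].
by rewrite /= expz_nat eqxx.
Qed.

Lemma expzK : cancel expz logz.
Proof. by move=> x; apply: expz_inj; rewrite logzK. Qed.

Definition shift (p : {perm gT}) : R := logz (p 1%g).
Definition slope (p : {perm gT}) : R := logz (p z) - shift p.

Lemma coordsE (p : {perm gT}) b a :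
  (forall x, p (expz x) = expz (b + a * x)) -> shift p = b /\ slope p = a.
Proof.
move=> pE; rewrite /slope /shift -expz0 -expz1 !pE !expzK mulr0 mulr1 addr0.
by split; last rewrite addrC addKr.
Qed.

Lemma holomorph_coords p : p \in holomorph gT ->
  forall x, p (expz x) = expz (shift p + slope p * x).
Proof.
rewrite inE => /existsP[eta /existsP[alpha /andP[Aut_alpha /forallP pE]]].
suff affE x : p (expz x) = expz (logz eta + logz (alpha z) * x).
  by have [-> ->] := coordsE affE.
rewrite (eqP (pE _)) mulrC expzD expzM !logzK /expz -(autmE Aut_alpha).
by rewrite morphX ?inE.
Qed.

Lemma shift_fix1 (p : {perm gT}) : p 1%g = 1%g -> shift p = 0.
Proof. by rewrite /shift => ->; rewrite -expz0 expzK. Qed.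

Variables (G : {group {perm gT}}).

Lemma hol_transitive_shift1 : hol_transitive G -> exists2 h, h \in G & shift h = 1.
Proof.
move=> /atransP trG; have : z \in orbit 'P G 1%g by rewrite trG ?inE.
by case/orbitP=> h hG hz; exists h; rewrite // /shift -apermE hz -expz1 expzK.
Qed.

Hypothesis GH : G \subset holomorph gT.

Lemma perm_coords p x : p \in G -> p (expz x) = expz (shift p + slope p * x).
Proof. by move=> pG; apply: holomorph_coords; apply: (subsetP GH). Qed.

Lemma coords_inj p q : p \in G -> q \in G ->
  shift p = shift q -> slope p = slope q -> p = q.
Proof.
move=> pG qG shift_pq slope_pq; apply/permP => g.
by rewrite -(logzK g) !perm_coords // shift_pq slope_pq.
Qed.

Lemma shift1 : shift 1 = 0.
Proof. by rewrite /shift perm1 -expz0 expzK. Qed.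

Lemma slope1 : slope 1 = 1.
Proof. by rewrite /slope shift1 subr0 perm1 -expz1 expzK. Qed.

Lemma coords_eq1 p : p \in G -> shift p = 0 -> slope p = 1 -> p = 1%g.
Proof. by move=> pG shift_p slope_p; apply: coords_inj; rewrite ?shift1 ?slope1. Qed.

Lemma coordsM p q : p \in G -> q \in G ->
  shift (p * q) = shift q + slope q * shift p /\ slope (p * q) = slope q * slope p.
Proof.
by move=> pG qG; apply: coordsE => x; rewrite permM !perm_coords //; congr expz; ring.
Qed.

Lemma shiftM p q : p \in G -> q \in G -> shift (p * q) = shift q + slope q * shift p.
Proof. by move=> pG qG; case: (coordsM pG qG). Qed.

Lemma slopeM p q : p \in G -> q \in G -> slope (p * q) = slope q * slope p.
Proof. by move=> pG qG; case: (coordsM pG qG). Qed.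

Lemma slope_unit p : p \in G -> slope p \is a GRing.unit.
Proof.
move=> pG; apply/unitrPr; exists (slope p^-1).
by rewrite mulrC -slopeM ?groupV // mulgV slope1.
Qed.

Definition cshift p q := (slope q - 1) * shift p - (slope p - 1) * shift q.

Lemma commute_cshift p q : p \in G -> q \in G -> commute p q <-> cshift p q = 0.
Proof.
move=> pG qG; have cshift_comm : cshift p q = shift (p * q) - shift (q * p).
  by rewrite !shiftM // /cshift; ring.
split=> [pq_comm | /eqP]; first by rewrite cshift_comm pq_comm subrr.
rewrite cshift_comm subr_eq0 => /eqP shift_pq.
by apply: coords_inj; rewrite ?groupM // !slopeM // mulrC.
Qed.

Lemma coordsR p q : p \in G -> q \in G ->
  shift [~ p, q]%g = cshift p q /\ slope [~ p, q]%g = 1.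
Proof.
move=> pG qG; have := commgC p q; have : [~ p, q]%g \in G by rewrite groupR.
move: [~ p, q]%g => r rG rE.
have slope_r : slope r = 1.
  have pq_unit : slope p * slope q \is a GRing.unit by rewrite unitrM !slope_unit.
  have := congr1 slope rE; rewrite !slopeM ?groupM // mulrC -[LHS]mul1r.
  by move/(mulIr pq_unit)/esym.
split=> //; have /eqP := congr1 shift rE.
by rewrite !shiftM ?groupM // slope_r mul1r -subr_eq => /eqP <-; rewrite /cshift; ring.
Qed.

Lemma coordsX1 p k : p \in G -> slope p = 1 ->
  shift (p ^+ k) = k%:R * shift p /\ slope (p ^+ k) = 1.
Proof.
move=> pG slope_p; elim: k => [|k [IHs IHa]]; first by rewrite expg0 shift1 slope1 mul0r.
have pkG : (p ^+ k)%g \in G by rewrite groupX.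
rewrite expgSr shiftM ?slopeM // IHs IHa slope_p mulr1 mul1r.
by split=> //; ring.
Qed.

End AffineCoordinates.

Section Pow2Holomorph.
Variables (e : nat) (gT : finGroupType) (z : gT).
Hypotheses (e_gt0 : (0 < e)%N) (oz : #[z]%g = (2 ^ e)%N) (genz : [set: gT] = <[z]>%g).
Variables (G : {group {perm gT}}).
Hypothesis GH : G \subset holomorph gT.
Local Notation R := 'Z_(2 ^ e).
Local Open Scope ring_scope.
Local Notation shift := (shift (2 ^ e) z).
Local Notation slope := (slope (2 ^ e) z).
Local Notation cshift := (cshift (2 ^ e) z).
Local Notation n_gt1 := (exp2_gt1 e_gt0).
Local Notation unitZp2E := (unitZp2E e_gt0).
Local Notation dvd2_1_subr1 := (dvd2_1_subr1 e_gt0).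
Local Notation mul_exp2_unit_eq0 := (mul_exp2_unit_eq0 e_gt0).
Local Notation dvd2_ann := (dvd2_ann e_gt0).
Local Notation card_dvd2 := (card_dvd2 e_gt0).
Local Notation shiftM := (shiftM n_gt1 oz genz GH).
Local Notation slopeM := (slopeM n_gt1 oz genz GH).
Local Notation slope_unit := (slope_unit n_gt1 oz genz GH).
Local Notation coords_inj := (coords_inj n_gt1 oz genz GH).
Local Notation coords_eq1 := (coords_eq1 n_gt1 oz genz GH).
Local Notation coordsR := (coordsR n_gt1 oz genz GH).
Local Notation coordsX1 := (coordsX1 n_gt1 oz genz GH).
Local Notation commute_cshift := (commute_cshift n_gt1 oz genz GH).
Local Notation shift1 := (shift1 n_gt1 oz genz).
Local Notation slope1 := (slope1 n_gt1 oz genz).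

Lemma shift_expg2X p s u j : p \in G -> dvd2 2 (slope p - 1) ->
  u \is a GRing.unit -> shift p = 2%:R ^+ s * u ->
  exists2 v, v \is a GRing.unit & shift (p ^+ (2 ^ j))%g = 2%:R ^+ (s + j) * v.
Proof.
elim: j p s u => [|j IHj] p s u pG slope_p u_unit shift_p.
  by exists u; rewrite ?expg1 ?addn0.
have p2G : (p ^+ 2)%g \in G by rewrite groupX.
have [v v_unit slope1E] := addr1_1mod4 e_gt0 slope_p.
rewrite expnS expgM -addSnnS; apply: (IHj _ _ (v * u)) => //.
- by rewrite expgS expg1 slopeM // -expr2 sqr_1mod4.
- by rewrite unitrM v_unit.
- rewrite expgS expg1 shiftM // shift_p -[X in X + _]mul1r -mulrDl slope1E exprS.
  by rewrite mulrACA.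
Qed.

Lemma slope_sub1_even p : p \in G -> dvd2 1 (slope p - 1).
Proof. by move=> pG; apply: dvd2_1_subr1; rewrite -unitZp2E slope_unit. Qed.

Variables (h : {perm gT}).
Hypotheses (hG : h \in G) (shift_h : shift h = 1).

Lemma cshiftE p q : cshift p q = cshift p h * shift q - cshift q h * shift p.
Proof. by rewrite /cshift shift_h; ring. Qed.

Lemma cshift_h_eq0 p : cshift p h = 0 -> slope p = 1 + (slope h - 1) * shift p.
Proof. by rewrite /cshift shift_h mulr1 => /eqP; rewrite subr_eq0 => /eqP ->; ring. Qed.

Lemma cshift_h_even p : p \in G -> dvd2 1 (cshift p h).
Proof.
move=> pG; rewrite /cshift shift_h mulr1.
by apply: dvd2D; [apply: dvd2Mr | apply: dvd2N]; apply: slope_sub1_even.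
Qed.

Lemma stab_cshift_neq0 s : s \in G -> s 1%g = 1%g -> s != 1%g -> cshift s h != 0.
Proof.
move=> sG s1 s_neq1; have shift_s := shift_fix1 n_gt1 oz genz s1.
apply: contra_neq s_neq1 => /cshift_h_eq0; rewrite shift_s mulr0 addr0.
exact: coords_eq1.
Qed.

Lemma cent_cshift p : p \in 'C_G[h] -> cshift p h = 0.
Proof. by case/setIP=> pG /cent1P/(commute_cshift pG hG). Qed.

Lemma cent_inj : {in 'C_G[h] &, injective shift}.
Proof.
move=> p q pC qC shift_pq; have /setIP[pG _] := pC; have /setIP[qG _] := qC.
apply: coords_inj => //.
by rewrite (cshift_h_eq0 (cent_cshift pC)) (cshift_h_eq0 (cent_cshift qC)) shift_pq.
Qed.

Lemma cent_slope_1mod4 p : p \in 'C_G[h] -> dvd2 1 (shift p) -> dvd2 2 (slope p - 1).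
Proof.
move=> pC even_p; rewrite (cshift_h_eq0 (cent_cshift pC)) addrC addKr.
exact: dvd2M (slope_sub1_even hG) even_p.
Qed.

Section MinValuation.
Variables (l : nat) (g0 : {perm gT}) (u : R).
Hypotheses (lt_l_e : (l < e)%N) (dvd_cshift : {in G, forall p, dvd2 l (cshift p h)}).
Hypotheses (g0G : g0 \in G) (u_unit : u \is a GRing.unit).
Hypothesis cshift_g0 : cshift g0 h = 2%:R ^+ l * u.

Lemma valuation_gt0 : (0 < l)%N.
Proof.
rewrite lt0n; apply/eqP => l0; have := cshift_h_even g0G.
by rewrite cshift_g0 l0 expr0 mul1r -[dvd2 1 u]negbK -unitZp2E u_unit.
Qed.

Lemma dvd2_cshift p q : p \in G -> q \in G -> dvd2 l (cshift p q).
Proof.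
move=> pG qG; rewrite cshiftE.
by apply: dvd2D; [apply: dvd2Mr | apply/dvd2N/dvd2Mr]; apply: dvd_cshift.
Qed.

Definition translations := [set r in G | (slope r == 1) && dvd2 l (shift r)].

Lemma translations_group_set : group_set translations.
Proof.
apply/group_setP; split; first by rewrite inE group1 slope1 shift1 eqxx dvd20.
move=> p q; rewrite !inE => /and3P[pG /eqP slope_p dvd_p] /and3P[qG /eqP slope_q dvd_q].
by rewrite groupM // slopeM // shiftM // slope_p slope_q mulr1 eqxx mul1r dvd2D.
Qed.
Canonical translations_group := Group translations_group_set.

Lemma commg_sub_translations : [~: G, G]%g \subset translations.
Proof.
rewrite gen_subG; apply/subsetP => _ /imset2P[p q pG qG ->].
have [shift_r slope_r] := coordsR pG qG.
by rewrite inE groupR // slope_r eqxx shift_r dvd2_cshift.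
Qed.

Lemma card_translations : (#|translations| <= 2 ^ (e - l))%N.
Proof.
have shift_inj : {in translations &, injective shift}.
  move=> p q; rewrite !inE => /and3P[pG /eqP slope_p _] /and3P[qG /eqP slope_q _].
  by move=> shift_pq; apply: coords_inj; rewrite ?slope_p ?slope_q.
rewrite -(card_in_imset shift_inj) (leq_trans _ (card_dvd2 (ltnW lt_l_e))) //.
apply/subset_leq_card/subsetP => _ /imsetP[p /setIdP[_ /andP[_ dvd_p]] ->].
by rewrite inE.
Qed.

Lemma order_commg_g0 : #[[~ g0, h]]%g = (2 ^ (e - l))%N.
Proof.
have rG : [~ g0, h]%g \in G by rewrite groupR.
have [shift_r slope_r] := coordsR g0G hG.
have shift_rX k : shift ([~ g0, h] ^+ (2 ^ k))%g = 2%:R ^+ (l + k) * u.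
  by rewrite (coordsX1 _ rG slope_r).1 shift_r cshift_g0 natrX exprD; ring.
apply: order_pfactor; rewrite ?subn_gt0 //.
  apply: coords_eq1; rewrite ?groupX ?(coordsX1 _ rG slope_r).2 // shift_rX.
  by apply/eqP; rewrite mul_exp2_unit_eq0 // subnKC // ltnW.
apply/eqP => /(congr1 shift)/eqP; rewrite shift1 shift_rX mul_exp2_unit_eq0 //.
by move=> ?; lia.
Qed.

Lemma card_commg : #|[~: G, G]%g| = (2 ^ (e - l))%N.
Proof.
have := leq_trans (subset_leq_card commg_sub_translations) card_translations.
move=> le_commg; apply/eqP; rewrite eqn_leq le_commg -order_commg_g0.
by rewrite subset_leq_card // cycle_subG mem_commg.
Qed.

Lemma center_coords g : g \in 'Z(G)%g -> g \in 'C_G[h]%g /\ dvd2 (e - l) (shift g).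
Proof.
case/centerP=> gG cent_g.
have gC : g \in 'C_G[h]%g by rewrite inE gG; apply/cent1P/cent_g.
split=> //; have /(commute_cshift gG g0G) := cent_g g0 g0G.
rewrite cshiftE cent_cshift // mul0r sub0r cshift_g0 => /eqP; rewrite oppr_eq0 -mulrA.
move=> /eqP/(dvd2_ann (ltnW lt_l_e))/(dvd2Ml u^-1).
by rewrite mulKr.
Qed.

Lemma card_center_le : (#|'Z(G)%g| <= 2 ^ l)%N.
Proof.
have shift_inj : {in 'Z(G)%g &, injective shift}.
  by apply: sub_in2 cent_inj => g /center_coords[].
rewrite -(card_in_imset shift_inj).
rewrite -[X in (_ <= 2 ^ X)%N](subKn (ltnW lt_l_e)).
rewrite (leq_trans _ (card_dvd2 (leq_subr l e))) //.
apply/subset_leq_card/subsetP => _ /imsetP[g /center_coords[_ dvd_g] ->].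
by rewrite inE.
Qed.

Hypothesis G_big : (2 ^ e < #|G|)%N.

Lemma card_cent_gt : (2 ^ l < #|'C_G[h]%g|)%N.
Proof.
have classG : (#|'C_G[h]%g| * #|(h ^: G)%g| = #|G|)%N.
  by rewrite -index_cent1 Lagrange ?subsetIl.
have class_le : (#|(h ^: G)%g| <= 2 ^ (e - l))%N.
  by rewrite -card_commg card_class_le_commg.
have pos : (0 < 2 ^ (e - l))%N by rewrite expn_gt0.
rewrite -(ltn_pmul2r pos) -expnD subnKC ?(ltnW lt_l_e) //.
by rewrite (leq_trans G_big) // -classG leq_mul2l class_le orbT.
Qed.

(* Left multiplication by h, of shift 1, turns odd shifts into even ones. *)
Lemma card_cent_odd_le (K := [set p | dvd2 1 (shift p)]) :
  (#|'C_G[h]%g :\: K| <= #|'C_G[h]%g :&: K|)%N.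
Proof.
rewrite -(card_imset _ (mulgI h)); apply/subset_leq_card/subsetP.
move=> _ /imsetP[q /setDP[qC odd_q] ->]; rewrite inE in odd_q.
have hC : h \in 'C_G[h]%g by rewrite inE hG cent1id.
have qG : q \in G by case/setIP: qC.
rewrite inE groupM //= inE shiftM // shift_h mulr1.
have -> : shift q + slope q = (shift q - 1) + (slope q - 1) + 2%:R ^+ 1 * 1 by ring.
by apply: dvd2D (dvd2_exp2 1 1); apply: dvd2D (dvd2_1_subr1 odd_q) (slope_sub1_even qG).
Qed.

Lemma exists_cent_valuation :
  exists2 g, g \in 'C_G[h]%g & dvd2 1 (shift g) && ~~ dvd2 (e - l).+1 (shift g).
Proof.
suff : ~~ [forall g in 'C_G[h]%g, dvd2 1 (shift g) ==> dvd2 (e - l).+1 (shift g)].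
  by rewrite negb_forall_in => /exists_inP[g gC]; rewrite negb_imply; exists g.
apply: contraTN card_cent_gt => /forall_inP high; rewrite -leqNgt.
set K := [set p | dvd2 1 (shift p)].
have even_le : (#|'C_G[h]%g :&: K| <= 2 ^ l.-1)%N.
  have shift_inj : {in 'C_G[h]%g :&: K &, injective shift}.
    by apply: sub_in2 cent_inj => g /setIP[].
  rewrite -(card_in_imset shift_inj) -subn1 -(subKn (ltnW lt_l_e)) -subnDA addn1.
  rewrite (leq_trans _ (card_dvd2 _)) ?subn_gt0 //;
    last by rewrite ltn_subrL e_gt0 valuation_gt0.
  apply/subset_leq_card/subsetP => _ /imsetP[g /setIP[gC even_g] ->].
  by rewrite inE in even_g; rewrite inE (implyP (high g gC) even_g).
rewrite -(cardsID K 'C_G[h]%g) (leq_trans (leq_add (leqnn _) card_cent_odd_le)) //.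
rewrite addnn -mul2n.
by rewrite -[in X in (_ <= X)%N](prednK valuation_gt0) expnS leq_mul2l.
Qed.

Lemma exists_center_order : exists2 g, g \in 'Z(G)%g & #[g]%g = (2 ^ l)%N.
Proof.
have [g gC /andP[even_g high_g]] := exists_cent_valuation.
have gG : g \in G by case/setIP: gC.
have shift_g_neq0 : shift g != 0 by apply: contraNneq high_g => ->; apply: dvd20.
have [s [v [v_unit lt_s_e shift_g]]] := Zp2_decomp e_gt0 shift_g_neq0.
have le_s : (s <= e - l)%N.
  by rewrite leqNgt; apply: contra high_g => lt_s; rewrite shift_g (dvd2W lt_s) ?dvd2_exp2.
have [v' v'_unit] :=
  shift_expg2X (e - l - s) gG (cent_slope_1mod4 gC even_g) v_unit shift_g.
rewrite subnKC //; set g' := (g ^+ _)%g => shift_g'.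
have g'C : g' \in 'C_G[h]%g by rewrite groupX.
have g'G : g' \in G by case/setIP: g'C.
exists g'.
  apply/centerP; split=> // q qG; apply/(commute_cshift g'G qG).
  rewrite cshiftE cent_cshift // mul0r sub0r shift_g'.
  have /dvd2P[y ->] := dvd_cshift qG.
  by rewrite mulrACA -exprD subnKC ?(ltnW lt_l_e) // exp2e_eq0 // mul0r oppr0.
have even_g' : dvd2 1 (shift g').
  by rewrite shift_g' (dvd2W _ (dvd2_exp2 _ _)) // subn_gt0.
have shift_g'X j :=
  shift_expg2X j g'G (cent_slope_1mod4 g'C even_g') v'_unit shift_g'.
apply: order_pfactor valuation_gt0 _ _ => //.
  have [w w_unit shift_w] := shift_g'X l.
  apply: cent_inj; rewrite ?groupX ?group1 // shift1 shift_w.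
  by apply/eqP; rewrite mul_exp2_unit_eq0 // subnK // ltnW.
have [w w_unit shift_w] := shift_g'X l.-1.
apply/eqP => /(congr1 shift)/eqP; rewrite shift1 shift_w mul_exp2_unit_eq0 //.
by have := valuation_gt0; clear -lt_l_e; lia.
Qed.

Lemma card_center : #|'Z(G)%g| = (2 ^ l)%N.
Proof.
have [g gZ og] := exists_center_order.
apply/eqP; rewrite eqn_leq card_center_le -og subset_leq_card //.
by rewrite cycle_subG.
Qed.

End MinValuation.
End Pow2Holomorph.

Theorem lemma5p6 (e : nat) (gT : finGroupType) (G : {group {perm gT}}) :
  (2 <= e)%N -> cyclic [set: gT] -> #|gT| = (2 ^ e)%N ->
  G \subset holomorph gT -> hol_transitive G -> ~~ hol_regular G ->
  (#|'Z(G)| * #|[~: G, G]|)%N = (2 ^ e)%N.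
Proof.
move=> le2e /cyclicP[z genz] cardT GH trG nrG.
have e_gt0 : (0 < e)%N by apply: leq_trans le2e.
have oz : #[z] = (2 ^ e)%N by rewrite /order -genz cardsT.
have n_gt1 := exp2_gt1 e_gt0.
have [h hG shift_h] := hol_transitive_shift1 n_gt1 oz genz trG.
have [s sG [s1 s_neq1]] := hol_nonregular_stab trG nrG.
pose f p := cshift (2 ^ e) z p h.
have [l [lt_l_e dvd_f [u u_unit /imsetP[g0 g0G cshift_g0]]]] :=
  exists_min_valuation e_gt0 (imset_f f sG)
    (stab_cshift_neq0 e_gt0 oz genz GH shift_h sG s1 s_neq1).
have {}dvd_f : {in G, forall p, dvd2 l (f p)} by move=> p pG; apply/dvd_f/imset_f.
have G_big : (2 ^ e < #|G|)%N by rewrite -cardT hol_nonregular_card.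
rewrite (card_center e_gt0 oz genz GH hG shift_h lt_l_e dvd_f g0G u_unit
                    (esym cshift_g0) G_big).
rewrite (card_commg e_gt0 oz genz GH hG shift_h lt_l_e dvd_f g0G u_unit (esym cshift_g0)).
by rewrite -expnD subnKC // ltnW.
Qed.
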